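(* Let $W=W(v_0;v_1,\dots,v_k)$ be a $k$-wheel and $T$ a coupled tree of $W$. Then at least one of the following holds: (a) for all $i\in[1,k]$, $v_0v_i\in T$ if and only if $v_iv_{i+1}\in\bar T$; or (b) for all $i\in[1,k]$, $v_0v_i\in T$ if and only if $v_{i-1}v_i\in\bar T$.
   Context: For $k\ge 3$ and distinct vertices $v_0,\dots,v_k$, the $k$-wheel $W=W(v_0;v_1,\dots,v_k)$ is the graph whose edges are the radii $v_0v_i$ ($1\le i\le k$) and the chords $v_iv_{i+1}$ ($1\le i\le k$); spoke indices are read cyclically in $[1,k]$ (so $v_{k+1}=v_1$, $v_{1-1}=v_k$). A coupled tree of $W$ is a spanning tree $T\subseteq E(W)$ of $V(W)$ such that $\bar T=E(W)\setminus T$ is also a spanning tree of $V(W)$. *)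

From mathcomp Require Import all_boot.
Set Implicit Arguments. Unset Strict Implicit. Unset Printing Implicit Defensive.

(* The k-wheel W(v_0; v_1, ..., v_k) on the vertex type 'I_k.+1:
   v_i is the ordinal with value i (v_0 is the hub). Edges are 2-element
   vertex sets. *)
Definition wv (k i : nat) : 'I_k.+1 := inord i.

Definition wnext (k i : nat) : nat := if i == k then 1 else i.+1.
Definition wprev (k i : nat) : nat := if i == 1 then k else i.-1.

Definition edge (V : finType) (x y : V) : {set V} := [set x; y].

Definition wheel_edges (k : nat) : {set {set 'I_k.+1}} :=
  [set edge (wv k 0) (wv k i.+1) | i : 'I_k] :|:
  [set edge (wv k i.+1) (wv k (wnext k i.+1)) | i : 'I_k].

Definition adj (V : finType) (F : {set {set V}}) : rel V :=
  fun x y => (x != y) && (edge x y \in F).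

Definition connected_graph (V : finType) (F : {set {set V}}) : Prop :=
  forall x y : V, connect (adj F) x y.

Definition has_cycle (V : finType) (F : {set {set V}}) : Prop :=
  exists s : seq V, [/\ 3 <= size s, uniq s & cycle (adj F) s].

Definition spanning_tree (V : finType) (F : {set {set V}}) : Prop :=
  connected_graph F /\ ~ has_cycle F.

Definition coupled_tree (k : nat) (T : {set {set 'I_k.+1}}) : Prop :=
  [/\ T \subset wheel_edges k, spanning_tree T
    & spanning_tree (wheel_edges k :\: T)].

From mathcomp Require Import all_boot zify.
Set Implicit Arguments. Unset Strict Implicit. Unset Printing Implicit Defensive.

(* Record which spokes (s) and chords (c) lie in T; the complement then has
   pattern (~~ s, ~~ c), and connectivity and acyclicity of both trees become
   local conditions on these two k-periodic boolean sequences.  Where c does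
   not turn (c_{j-1} = c_j), the spoke at j is forced: s_j = ~~ c_j, otherwise
   v_j is isolated in T or in its complement.  Along a maximal run of equal
   chords the inner spokes are thus forced, and exactly one of the two end
   spokes is in T: two would close a cycle, none would cut the run off from the
   hub.  Hence [s_j != c_j] takes the same value at every turning point, and
   this value decides between (a) and (b). *)

Lemma ex_last_before (P : pred nat) t : P 0 -> 0 < t ->
  exists u, [/\ u < t, P u & forall v, u < v < t -> ~~ P v].
Proof.
move=> P0; elim: t => // t IH _; case: (posnP t) => [->|t_gt0].
  by exists 0; split=> // -[|[|v]].
have [u [ut Pu after_u]] := IH t_gt0; case Pt: (P t).
  by exists t; split=> // v; rewrite ltnS => /andP[/leq_trans/[apply]]; rewrite ltnn.
exists u; split=> [||v /andP[uv]]; rewrite ?ltnS ?(ltnW ut) //.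
by rewrite leq_eqVlt => /orP[/eqP->|vt]; rewrite ?Pt // after_u ?uv.
Qed.

(* Patterns of edge sets of the wheel: [s j] is the spoke to v_(j+1) and [c j]
   the chord from v_(j+1) to v_(j+2), indices mod k, and [j + k.-1] is the
   predecessor of [j].  The conditions below are what connectivity (no run of
   rim vertices cut off from the hub) and acyclicity (no cycle through the hub
   or along the whole rim) say about the pattern of a spanning subgraph. *)
Definition kperiodic k (f : nat -> bool) := forall i j, i = j %[mod k] -> f i = f j.

Definition turn k (c : nat -> bool) j := c (j + k.-1) != c j.

Lemma kperiodic_predS k (f : nat -> bool) j : 0 < k -> kperiodic k f -> f (j.+1 + k.-1) = f j.
Proof. by move=> k_gt0 pf; apply: pf; rewrite addSnnS prednK // modnDr. Qed.

Lemma kperiodic_turn k (c : nat -> bool) : kperiodic k c -> kperiodic k (turn k c).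
Proof.
move=> pc i j ij; rewrite /turn (pc i j) // (pc (i + k.-1) (j + k.-1)) //.
by rewrite -modnDml ij modnDml.
Qed.

Definition arcs_attached k (s c : nat -> bool) :=
  forall a L, L < k -> ~~ c (a + k.-1) -> ~~ c (a + L) -> exists2 t, t <= L & s (a + t).

Definition fans_open k (s c : nat -> bool) :=
  forall a L, 0 < L < k -> (forall t, t < L -> c (a + t)) -> s a -> ~~ s (a + L).

Definition rim_open (c : nat -> bool) := exists j, ~~ c j.

Definition tree_pattern k (s c : nat -> bool) :=
  [/\ kperiodic k s, kperiodic k c, arcs_attached k s c, fans_open k s c & rim_open c].

Definition coupled_pattern k (s c : nat -> bool) :=
  tree_pattern k s c /\ tree_pattern k (fun j => ~~ s j) (fun j => ~~ c j).

Lemma eq_tree_pattern k (s1 c1 s2 c2 : nat -> bool) :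
  s1 =1 s2 -> c1 =1 c2 -> tree_pattern k s1 c1 -> tree_pattern k s2 c2.
Proof.
move=> es ec [ps pc arcs fans [j cj]]; split.
- by move=> i i' /ps; rewrite !es.
- by move=> i i' /pc; rewrite !ec.
- move=> a L Lk; rewrite -!ec => /(arcs a L Lk) /[apply] -[t tL st].
  by exists t; rewrite -?es.
- by move=> a L hL hc; rewrite -!es; apply: fans => // t /hc; rewrite -ec.
- by exists j; rewrite -ec.
Qed.

Lemma coupled_pattern_negb k (s c : nat -> bool) :
  coupled_pattern k s c -> coupled_pattern k (fun j => ~~ s j) (fun j => ~~ c j).
Proof. by case=> p p'; split=> //; apply: eq_tree_pattern p => j; rewrite negbK. Qed.

Section RunOfChords.

Variables (k : nat) (s c : nat -> bool).
Hypotheses (k_gt0 : 0 < k) (sc : coupled_pattern k s c).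

Lemma spoke_no_turn j : c (j + k.-1) = c j -> s j = ~~ c j.
Proof.
have [[_ _ arcs _ _] [_ _ arcs' _ _]] := sc.
move=> cE; case cj: (c j); rewrite cj in cE.
- have [||t] := arcs' j 0 k_gt0; rewrite ?addn0 ?cE ?cj // leqn0 => /eqP->.
  by rewrite addn0 => /negbTE.
- have [||t] := arcs j 0 k_gt0; rewrite ?addn0 ?cE ?cj // leqn0 => /eqP->.
  by rewrite addn0.
Qed.

Lemma one_end_spoke_present a L : 0 < L < k ->
  (forall t, t < L -> c (a + t)) -> ~~ c (a + k.-1) -> ~~ c (a + L) ->
  s (a + L) = ~~ s a.
Proof.
have [[_ pc arcs fans _] _] := sc.
move=> /andP[L_gt0 Lk] cin cbefore cafter.
have inner u : 0 < u < L -> ~~ s (a + u).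
  case/andP=> u_gt0 uL.
  have cprev : c (a + u + k.-1) = c (a + u).
    have -> : a + u + k.-1 = a + u.-1 + k by lia.
    by rewrite (pc _ (a + u.-1)) ?modnDr // !cin // (leq_ltn_trans (leq_pred u)).
  by rewrite (spoke_no_turn cprev) cin.
case sa: (s a) => /=.
- by apply/negbTE/(fans a L) => //; apply/andP.
- case saL: (s (a + L)) => //; have [t tL st] := arcs a L Lk cbefore cafter.
  case: (posnP t) => [t0|t_gt0]; first by rewrite t0 addn0 sa in st.
  case: (ltngtP t L) => [tlt|tgt|teq]; last by rewrite teq saL in st.
  + by rewrite (negbTE (inner t _)) ?t_gt0 in st.
  + by rewrite ltnNge tL in tgt.
Qed.

End RunOfChords.

Section Dichotomy.

Variables (k : nat) (s c : nat -> bool).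
Hypotheses (k_gt0 : 0 < k) (sc : coupled_pattern k s c).

Lemma one_end_spoke a L : 0 < L < k -> (forall t, t < L -> c (a + t) = c a) ->
  turn k c a -> c (a + L) != c a -> s (a + L) = ~~ s a.
Proof.
rewrite /turn; case: (c a) => hL cin; rewrite ?eqb_id ?eqbF_neg => cbefore cafter.
  by apply: (one_end_spoke_present k_gt0 sc) => // t /cin ->.
apply: negb_inj; apply: (one_end_spoke_present k_gt0 (coupled_pattern_negb sc)) => //.
by move=> t /cin ->.
Qed.

Lemma consecutive_turns_agree a L : 0 < L < k -> turn k c a -> turn k c (a + L) ->
  (forall u, 0 < u < L -> ~~ turn k c (a + u)) ->
  (s (a + L) != c (a + L)) = (s a != c a).
Proof.
have [[_ pc _ _ _] _] := sc.
move=> /andP[L_gt0 Lk] ta taL no_turn.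
have run_const t : t < L -> c (a + t) = c a.
  elim: t => [|t IH] tL; first by rewrite addn0.
  have /no_turn : 0 < t.+1 < L by rewrite tL.
  by rewrite /turn negbK addnS (kperiodic_predS _ k_gt0 pc) => /eqP <-; rewrite IH // ltnW.
have cL : c (a + L) = ~~ c a.
  move: taL; rewrite /turn -(prednK L_gt0) addnS kperiodic_predS //.
  by rewrite run_const ?prednK ?ltn_predL //; case: (c a); case: (c _).
rewrite (one_end_spoke _ run_const) ?L_gt0 // cL.
  by case: (s a); case: (c a).
by case: (c a).
Qed.

Lemma turns_agree a0 t : turn k c a0 -> t < k -> turn k c (a0 + t) ->
  (s (a0 + t) != c (a0 + t)) = (s a0 != c a0).
Proof.
move=> ta0; elim/ltn_ind: t => t IH tk tt; case: (posnP t) => [->|t_gt0].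
  by rewrite addn0.
have [|u [ut tu no_turn]] := @ex_last_before (fun v => turn k c (a0 + v)) t _ t_gt0.
  by rewrite /= addn0.
rewrite -(IH u ut (ltn_trans ut tk) tu).
have -> : a0 + t = a0 + u + (t - u) by lia.
apply: consecutive_turns_agree => //; first by apply/andP; lia.
- by rewrite -addnA subnKC // ltnW.
- by move=> v hv; rewrite -addnA no_turn //; lia.
Qed.

Lemma turn_exists : exists a, turn k c a.
Proof.
have [[_ pc _ _ [j cj]] [_ _ _ _ [j' cj']]] := sc.
suff turn_or_const i : (exists a, turn k c a) \/ c i = c 0.
  case: (turn_or_const j) => // cjE; case: (turn_or_const j') => // cj'E.
  by move: cj cj'; rewrite cjE cj'E => /negbTE ->.
elim: i => [|i [|IH]]; [by right | by left |].
case ti: (turn k c i.+1); first by left; exists i.+1.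
by right; move: ti; rewrite /turn kperiodic_predS // IH => /negbFE/eqP.
Qed.

Theorem coupled_pattern_dichotomy :
  (forall j, s j = ~~ c j) \/ (forall j, s j = ~~ c (j + k.-1)).
Proof.
have [[ps pc _ _ _] _] := sc.
have [a0 ta0] := turn_exists.
have turnE j : turn k c j -> (s j != c j) = (s a0 != c a0).
  pose t := (j + a0 * k.-1) %% k.
  have jE : j = a0 + t %[mod k].
    rewrite /t modnDmr.
    have -> : a0 + (j + a0 * k.-1) = a0 * k + j by nia.
    by rewrite modnMDl.
  rewrite (kperiodic_turn pc jE) (ps _ _ jE) (pc _ _ jE).
  by apply: turns_agree; rewrite ?ltn_pmod.
have flat j : ~~ turn k c j -> s j = ~~ c j /\ c (j + k.-1) = c j.
  by move=> /negbNE/eqP cE; rewrite (spoke_no_turn k_gt0 sc cE).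
case a0E: (s a0 != c a0); [left | right] => j; case tj: (turn k c j).
- by move: (turnE j tj); rewrite a0E; case: (s j); case: (c j).
- by case: (flat j (negbT tj)).
- move: tj (turnE j tj); rewrite a0E /turn.
  by case: (s j); case: (c j); case: (c (j + k.-1)).
- by case: (flat j (negbT tj)) => -> ->.
Qed.

End Dichotomy.

Lemma edge_sym (V : finType) (x y : V) : edge x y = edge y x.
Proof. by rewrite /edge setUC. Qed.

Lemma edge_eq (V : finType) (x y a b : V) :
  edge x y = edge a b -> x = a /\ y = b \/ x = b /\ y = a.
Proof.
move=> E; have ax : a \in edge x y by rewrite E set21.
have bx : b \in edge x y by rewrite E set22.
have /set2P[xE|xE] : x \in edge a b by rewrite -E set21.
all: have /set2P[yE|yE] : y \in edge a b by rewrite -E set22.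
all: subst x y; try by [left | right].
- by case/set2P: bx => ->; left.
- by case/set2P: ax => ->; left.
Qed.

Lemma adj_sym (V : finType) (F : {set {set V}}) : symmetric (adj F).
Proof. by move=> x y; rewrite /adj eq_sym edge_sym. Qed.

Definition rim k j : 'I_k.+1 := inord (j %% k).+1.
Definition spoke k (F : {set {set 'I_k.+1}}) j := edge (wv k 0) (rim k j) \in F.
Definition chord k (F : {set {set 'I_k.+1}}) j := edge (rim k j) (rim k j.+1) \in F.


Section Wheel.

Variables (k : nat).
Hypothesis k_gt2 : 2 < k.

Let k_gt0 : 0 < k. Proof. exact: ltnW (ltnW k_gt2). Qed.

Local Notation hub := (wv k 0).

Lemma rim_neq_hub j : rim k j != hub.
Proof. by rewrite -val_eqE /= !inordK // ltnS ltn_pmod. Qed.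

Lemma eq_rim i j : (rim k i == rim k j) = (i == j %[mod k]).
Proof. by rewrite -val_eqE /= !inordK // ltnS ltn_pmod. Qed.

Lemma rim_congr i j : i = j %[mod k] -> rim k i = rim k j.
Proof. by rewrite /rim => ->. Qed.

Lemma rimS_congr i j : i = j %[mod k] -> rim k i.+1 = rim k j.+1.
Proof. by move=> ij; apply: rim_congr; rewrite -(addn1 i) -(addn1 j) -modnDml ij modnDml. Qed.

Lemma rim_pred_succ j : rim k (j + k.-1).+1 = rim k j.
Proof. by apply: rim_congr; rewrite -addnS prednK // modnDr. Qed.

Lemma rim_pred i j : rim k j = rim k i.+1 -> rim k (j + k.-1) = rim k i.
Proof.
move/eqP; rewrite eq_rim => /eqP ji; apply: rim_congr.
by rewrite -modnDml ji modnDml addSnnS prednK // modnDr.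
Qed.

Lemma wv_rim j : j < k -> wv k j.+1 = rim k j.
Proof. by move=> jk; rewrite /rim modn_small. Qed.

Lemma wv_wnext j : j < k -> wv k (wnext k j.+1) = rim k j.+1.
Proof.
rewrite /wnext /rim; case: eqP => [->|/eqP jk1 jk]; first by rewrite modnn.
by rewrite modn_small // ltn_neqAle jk1 jk.
Qed.

Lemma wv_wprev j : j < k -> wv k (wprev k j.+1) = rim k (j + k.-1).
Proof.
rewrite /wprev; case: j => [_|j jk] /=.
  by rewrite add0n -wv_rim ?prednK ?ltn_predL.
by rewrite wv_rim ?(ltnW jk) //; apply: rim_congr; rewrite addSnnS prednK // modnDr.
Qed.

Lemma wheel_edgesP e : e \in wheel_edges k ->
  exists j, e = edge hub (rim k j) \/ e = edge (rim k j) (rim k j.+1).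
Proof.
case/setUP=> /imsetP[j _ ->]; exists j; first by left; rewrite wv_rim.
by right; rewrite wv_rim // wv_wnext.
Qed.

Lemma spoke_wheel j : edge hub (rim k j) \in wheel_edges k.
Proof.
by apply/setUP; left; apply/imsetP; exists (Ordinal (ltn_pmod j k_gt0)).
Qed.

Lemma chord_wheel j : edge (rim k j) (rim k j.+1) \in wheel_edges k.
Proof.
apply/setUP; right; apply/imsetP; exists (Ordinal (ltn_pmod j k_gt0)) => //=.
by rewrite wv_rim ?wv_wnext ?ltn_pmod //
  (rim_congr (modn_mod j k)) (rimS_congr (modn_mod j k)).
Qed.

Section Subgraph.

Variable F : {set {set 'I_k.+1}}.
Hypothesis sub_wheel : F \subset wheel_edges k.

Lemma spoke_periodic : kperiodic k (spoke F).
Proof. by move=> i j /rim_congr ij; rewrite /spoke ij. Qed.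

Lemma chord_periodic : kperiodic k (chord F).
Proof. by move=> i j ij; rewrite /chord (rim_congr ij) (rimS_congr ij). Qed.

Lemma adj_hub_rim j : adj F hub (rim k j) = spoke F j.
Proof. by rewrite /adj eq_sym rim_neq_hub. Qed.

Lemma adj_rim_hub j : adj F (rim k j) hub = spoke F j.
Proof. by rewrite adj_sym adj_hub_rim. Qed.

Lemma adj_rimS j : adj F (rim k j) (rim k j.+1) = chord F j.
Proof.
rewrite /adj eq_rim -[j.+1]addn1 -{1}(addn0 j) eqn_modDl mod0n modn_small ?addn1 //.
exact: ltnW k_gt2.
Qed.

Lemma adj_rimP j y : adj F (rim k j) y ->
  [\/ y = hub /\ spoke F j, y = rim k j.+1 /\ chord F j
    | y = rim k (j + k.-1) /\ chord F (j + k.-1)].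
Proof.
case/andP=> _ Fe; have [i [Ei|Ei]] := wheel_edgesP (subsetP sub_wheel _ Fe).
all: rewrite Ei in Fe; case: (edge_eq Ei) => -[ji ->].
- by move: (rim_neq_hub j); rewrite ji eqxx.
- by constructor 1; split; rewrite // /spoke ji.
- move/eqP: ji; rewrite eq_rim => /eqP ji.
  by constructor 2; rewrite /chord (rim_congr ji) (rimS_congr ji).
- by constructor 3; rewrite /chord rim_pred_succ (rim_pred ji) ji.
Qed.

Lemma connected_arcs_attached : connected_graph F -> arcs_attached k (spoke F) (chord F).
Proof.
move=> F_conn a L Lk c_before c_after.
have [/existsP[t st]|] := boolP [exists t : 'I_L.+1, spoke F (a + t)].
  by exists t; rewrite // -ltnS.
rewrite negb_exists => /forallP no_spoke.
pose arc := [pred y | [exists t : 'I_L.+1, y == rim k (a + t)]].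
have arc_closed : closed (adj F) arc.
  apply: (intro_closed (sym_connect_sym (@adj_sym _ F))) => x y + /existsP[t /eqP xE].
  rewrite xE.
  have tL : t <= L by rewrite -ltnS.
  case/adj_rimP => -[-> Fe].
  - by move: (no_spoke t); rewrite Fe.
  - case: (ltngtP t L) => [tL'|Lt|tE]; last by move: Fe; rewrite tE (negbTE c_after).
      by apply/existsP; exists (Ordinal (tL' : t.+1 < L.+1)); rewrite addnS.
    by rewrite ltnNge tL in Lt.
  - case: (posnP t) => [t0|t_gt0]; first by move: Fe; rewrite t0 addn0 (negbTE c_before).
    apply/existsP; exists (Ordinal (leq_ltn_trans (leq_pred t) (ltn_ord t))) => /=.
    by rewrite -(prednK t_gt0) addnS rim_pred_succ.
have := closed_connect arc_closed (F_conn (rim k a) hub).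
rewrite !inE; have -> : [exists t : 'I_L.+1, rim k a == rim k (a + t)].
  by apply/existsP; exists ord0; rewrite addn0.
by move/esym/existsP => -[t]; rewrite eq_sym (negbTE (rim_neq_hub _)).
Qed.

Lemma rim_path a L : (forall t, t < L -> chord F (a + t)) ->
  path (adj F) (rim k a) [seq rim k t | t <- iota a.+1 L].
Proof.
elim: L a => [|L IH] a cin //=.
rewrite adj_rimS -{1}(addn0 a) cin //=; apply: IH => t tL.
by rewrite addSnnS; apply: cin.
Qed.

Lemma last_rim_path a L : last (rim k a) [seq rim k t | t <- iota a.+1 L] = rim k (a + L).
Proof. by elim: L a => [|L IH] a /=; rewrite ?addn0 // IH addSnnS. Qed.

Lemma uniq_rim_arc a n : n <= k -> uniq [seq rim k t | t <- iota a n].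
Proof.
move=> nk; rewrite map_inj_in_uniq ?iota_uniq // => t u.
rewrite !mem_iota => /andP[aT tn] /andP[aU un] /eqP.
by rewrite eq_rim -(subnKC aT) -(subnKC aU) eqn_modDl !modn_small => [/eqP -> ||]; lia.
Qed.

Lemma acyclic_fans_open : ~ has_cycle F -> fans_open k (spoke F) (chord F).
Proof.
move=> F_acyc a L /andP[L_gt0 Lk] cin sa; apply/negP => saL; apply: F_acyc.
exists (hub :: [seq rim k t | t <- iota a L.+1]); split.
- by rewrite /= size_map size_iota ltnS.
- rewrite cons_uniq uniq_rim_arc // andbT.
  by apply/mapP => -[t _ /eqP]; rewrite eq_sym (negbTE (rim_neq_hub _)).
- by rewrite /cycle rcons_path /= adj_hub_rim sa rim_path //= last_rim_path adj_rim_hub.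
Qed.

Lemma acyclic_rim_open : ~ has_cycle F -> rim_open (chord F).
Proof.
move=> F_acyc; have [/existsP[t ct]|] := boolP [exists t : 'I_k, ~~ chord F t].
  by exists t.
rewrite negb_exists => /forallP all_chords; case: F_acyc.
have cin t : t < k -> chord F t by move=> tk; move: (all_chords (Ordinal tk)); rewrite negbK.
exists [seq rim k t | t <- iota 0 k]; split; rewrite ?size_map ?size_iota ?uniq_rim_arc //.
have -> : iota 0 k = 0 :: iota 1 k.-1 by rewrite -{1}(prednK k_gt0).
rewrite /cycle /= rcons_path rim_path => [|t tk]; last first.
  by rewrite cin // (leq_trans tk) ?leq_pred.
rewrite last_rim_path add0n -(rim_pred_succ 0) add0n adj_rimS cin //.
by rewrite ltn_predL.
Qed.

Lemma spanning_tree_pattern : spanning_tree F -> tree_pattern k (spoke F) (chord F).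
Proof.
case=> F_conn F_acyc; split.
- exact: spoke_periodic.
- exact: chord_periodic.
- exact: connected_arcs_attached.
- exact: acyclic_fans_open.
- exact: acyclic_rim_open.
Qed.

End Subgraph.

Lemma spoke_setD (T : {set {set 'I_k.+1}}) j : spoke (wheel_edges k :\: T) j = ~~ spoke T j.
Proof. by rewrite /spoke inE spoke_wheel andbT. Qed.

Lemma chord_setD (T : {set {set 'I_k.+1}}) j : chord (wheel_edges k :\: T) j = ~~ chord T j.
Proof. by rewrite /chord inE chord_wheel andbT. Qed.

Lemma coupled_tree_pattern (T : {set {set 'I_k.+1}}) :
  coupled_tree T -> coupled_pattern k (spoke T) (chord T).
Proof.
case=> T_sub T_tree G_tree; split; first exact: spanning_tree_pattern.
apply: (eq_tree_pattern (spoke_setD T) (chord_setD T)).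
by apply: spanning_tree_pattern G_tree; apply: subsetDl.
Qed.

End Wheel.

Theorem lemma3p2 (k : nat) (hk : 3 <= k) (T : {set {set 'I_k.+1}}) :
  coupled_tree T ->
  (forall i, 1 <= i <= k ->
     (edge (wv k 0) (wv k i) \in T <->
      edge (wv k i) (wv k (wnext k i)) \in wheel_edges k :\: T)) \/
  (forall i, 1 <= i <= k ->
     (edge (wv k 0) (wv k i) \in T <->
      edge (wv k (wprev k i)) (wv k i) \in wheel_edges k :\: T)).
Proof.
move=> T_coupled; have k_gt0 : 0 < k := ltnW (ltnW hk).
have [a_pattern|b_pattern] :=
  coupled_pattern_dichotomy k_gt0 (coupled_tree_pattern hk T_coupled).
- left=> i /andP[i_gt0 ik]; rewrite -(prednK i_gt0) in ik *.
  rewrite wv_rim // wv_wnext // inE chord_wheel //.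
  by rewrite andbT -/(spoke T _) -/(chord T _) a_pattern.
- right=> i /andP[i_gt0 ik]; rewrite -(prednK i_gt0) in ik *.
  rewrite wv_rim // wv_wprev //.
  rewrite -[in X in _ <-> X](rim_pred_succ hk i.-1) inE chord_wheel // andbT.
  by rewrite -/(spoke T _) -/(chord T _) b_pattern.
Qed.
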